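(* There exists a finite constant $C=C(d)$ such that for any $\ell\in\mathbb N$ there exists a flow $\phi_\ell$ connecting the point mass at $0$ to $q_\ell$, with support contained in $\Lambda_{2\ell-1}$, such that \[ \sum_{z\in\mathbb Z^d,b\in\mathcal B}\phi_\ell(z;b)^2\le Cg_d(\ell),\qquad\sum_{z\in\mathbb Z^d,b\in\mathcal B}|\phi_\ell(z;b)|\le C\ell. \]
   Context: $\mathcal B=\{e_1,\dots,e_d\}$ is the canonical basis of $\mathbb Z^d$. $\Lambda_\ell=\{z\in\mathbb Z^d:0\le z_i\le\ell-1,\ i=1,\dots,d\}$; $p_\ell(z)=\ell^{-d}\mathbf 1(z\in\Lambda_\ell)$; $q_\ell=p_\ell*p_\ell$, i.e. $q_\ell(z)=\sum_yp_\ell(y)p_\ell(z-y)$. A flow is a function $\phi:\mathbb Z^d\times\mathcal B\to\mathbb R$; its support is contained in $\Lambda$ if $\phi(x;b)\ne0$ implies $\{x,x+b\}\subseteq\Lambda$. A flow $\phi$ connects a measure $p$ to a measure $q$ if $p(z)-q(z)=\sum_{b\in\mathcal B}\big(\phi(z;b)-\phi(z-b;b)\big)$ for all $z\in\mathbb Z^d$. $g_d(\ell)=\ell,\log\ell,1$ for $d=1$, $d=2$, $d\ge3$. *)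

From HB Require Import structures.
From mathcomp Require Import all_boot all_order all_algebra.
From mathcomp Require Import all_classical all_reals all_analysis.
Set Implicit Arguments. Unset Strict Implicit. Unset Printing Implicit Defensive.
Import Order.TTheory GRing.Theory Num.Theory.
Local Open Scope ring_scope.

Definition pt (d : nat) := {ffun 'I_d -> int}.

Definition addb d (z : pt d) (i : 'I_d) : pt d := [ffun j => z j + (j == i)%:Z].
Definition subb d (z : pt d) (i : 'I_d) : pt d := [ffun j => z j - (j == i)%:Z].
Definition subp d (z y : pt d) : pt d := [ffun j => z j - y j].

Definition inbox d (l : nat) (z : pt d) : bool := [forall i, (0 <= z i) && (z i < l%:Z)].

Definition box_pt d l (y : {ffun 'I_d -> 'I_l}) : pt d := [ffun j => (nat_of_ord (y j))%:Z].

Definition p_l (R : realType) d (l : nat) (z : pt d) : R :=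
  if inbox l z then ((l%:R) ^+ d)^-1 else 0.

(* q_l = p_l * p_l; the sum over y in Z^d reduces to y in Lambda_l = supp p_l. *)
Definition q_l (R : realType) d (l : nat) (z : pt d) : R :=
  \sum_(y : {ffun 'I_d -> 'I_l}) p_l R l (box_pt y) * p_l R l (subp z (box_pt y)).

Definition delta0 (R : realType) d (z : pt d) : R := if z == [ffun => 0] then 1 else 0.

Definition flow (R : realType) d := pt d -> 'I_d -> R.

Definition support_in (R : realType) d (l : nat) (phi : flow R d) : Prop :=
  forall z i, phi z i != 0 -> inbox l z && inbox l (addb z i).

Definition connects (R : realType) d (p q : pt d -> R) (phi : flow R d) : Prop :=
  forall z : pt d, p z - q z = \sum_(i < d) (phi z i - phi (subb z i) i).

Definition g_d (R : realType) (d l : nat) : R :=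
  if d == 1%N then l%:R else if d == 2%N then ln (l%:R) else 1.

From HB Require Import structures.
From mathcomp Require Import all_boot all_order all_algebra.
From mathcomp Require Import all_classical all_reals all_analysis.
From mathcomp Require Import zify ring lra.
Set Implicit Arguments. Unset Strict Implicit. Unset Printing Implicit Defensive.
Import Order.TTheory GRing.Theory Num.Theory.
Local Open Scope ring_scope.

(* Write K = trunc_log 2 l and interpolate between delta_0 = q_1 and q_l
   through the product laws nu_k^d, where nu_k is the one-dimensional q at the
   scales 1, 2, 4, ..., 2^K, l.  The law nu_k^d is moved to nu_(k+1)^d one
   coordinate at a time, the active coordinate following the one-dimensional
   flow given by the difference of the two distribution functions.  This flow
   is bounded by 2^(-k(d-1)) and has l^1-norm O(d 2^k); summing over k gives
   the l^1 bound O(d l).  For the energy, (sum_k f_k)^2 <= 2 sum_(k <= k')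
   |f_k| |f_k'| gives O(d sum_k 2^(k(2-d))), which is O(l), O(log l), O(1)
   for d = 1, 2, >= 3. *)

Section OneDimension.
Variable R : realType.

Lemma sum_nat_indicator (a b L : nat) (c : R) : (a + b <= L)%N ->
  \sum_(0 <= x < L) (if (a <= x < a + b)%N then c else 0) = c *+ b.
Proof.
move=> abL; rewrite (big_cat_nat (n := a)) //=; last by lia.
rewrite (big_cat_nat (m := a) (n := a + b)) //=; last by lia.
rewrite [X in X + _]big_nat_cond [X in _ + (_ + X)]big_nat_cond.
rewrite [X in X + _]big1 ?add0r => [|x /andP[x_lt _]]; last by case: ifP => //; lia.
rewrite [X in _ + X]big1 ?addr0 => [|x /andP[x_ge _]]; last by case: ifP => //; lia.
rewrite big_nat_cond (eq_bigr (fun _ => c)) => [|x /andP[-> _] //].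
by rewrite -big_nat_cond sumr_const_nat; congr (_ *+ _); lia.
Qed.

Lemma sum_norm_le_support (F : int -> R) (L s : nat) : (s <= L)%N ->
  (forall x, `|F x| <= 1) -> (forall x : nat, (s <= x)%N -> F x%:Z = 0) ->
  \sum_(x < L) `|F x%:Z| <= s%:R.
Proof.
move=> sL F_le1 F_eq0.
apply: le_trans (_ : \sum_(x < L) (if (0 <= x < 0 + s)%N then 1 else 0) <= _).
  apply: ler_sum => x _; case: ifP => x_lt; first exact: F_le1.
  by rewrite F_eq0 ?normr0 //; lia.
by rewrite -(big_mkord xpredT (fun x => if (0 <= x < 0 + s)%N then 1 else 0)) sum_nat_indicator.
Qed.

(* [tent m] is the law of the sum of two independent uniform variables on
   [{0, ..., m-1}], i.e. the one-dimensional [q_m]. *)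
Definition tent (m : nat) (x : int) : R :=
  \sum_(y < m) (if (0 <= x - y%:Z) && (x - y%:Z < m%:Z) then (m%:R ^+ 2)^-1 else 0).

Lemma tent_ge0 m x : 0 <= tent m x.
Proof. by apply: sumr_ge0 => y _; case: ifP => // _; rewrite invr_ge0 exprn_ge0. Qed.

Lemma tent_le_inv m x : (0 < m)%N -> tent m x <= m%:R^-1.
Proof.
move=> m_gt0; apply: le_trans (_ : \sum_(y < m) (m%:R ^+ 2 : R)^-1 <= _).
  by apply: ler_sum => y _; case: ifP => // _; rewrite invr_ge0 exprn_ge0.
have m_neq0 : (m%:R : R) != 0 by rewrite pnatr_eq0 -lt0n.
by rewrite sumr_const card_ord -mulr_natr le_eqVlt; apply/orP; left; apply/eqP; field.
Qed.

Lemma tent_eq0 m x : ~~ ((0 <= x) && (x < (2 * m - 1)%N%:Z)) -> tent m x = 0.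
Proof.
move=> x_out; apply: big1 => y _; case: ifP => // /andP[y_le y_lt].
by move: x_out; have := ltn_ord y; lia.
Qed.

Lemma tent_sum m L : (0 < m)%N -> (2 * m - 1 <= L)%N ->
  \sum_(x < L) tent m x%:Z = 1.
Proof.
move=> m_gt0 mL; rewrite /tent exchange_big /=.
rewrite (eq_bigr (fun _ => (m%:R ^+ 2 : R)^-1 *+ m)) => [|y _].
  have m_neq0 : (m%:R : R) != 0 by rewrite pnatr_eq0 -lt0n.
  rewrite sumr_const card_ord -mulrnA -(mulr_natr ((m%:R ^+ 2 : R)^-1)).
  by rewrite natrM -expr2 mulVf // expf_neq0.
rewrite -(@sum_nat_indicator y m L (m%:R ^+ 2)^-1); last by have := ltn_ord y; lia.
rewrite big_mkord; apply: eq_bigr => x _; congr (if _ then _ else _).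
by apply/idP/idP => /andP[x_ge x_lt]; apply/andP; split; lia.
Qed.

Lemma tent1 x : tent 1 x = (x == 0)%:R.
Proof.
rewrite /tent big_ord1 /= subr0 expr1n invr1.
by case: (x =P 0) => [->|x_neq0] //=; case: ifP => // /andP[]; lia.
Qed.

Definition cumul (L : nat) (nu : int -> R) (x : int) : R :=
  \sum_(y < L | y%:Z <= x) nu y%:Z.

Lemma cumul_increment L nu x :
  (forall x, ~~ ((0 <= x) && (x < L%:Z)) -> nu x = 0) ->
  cumul L nu x - cumul L nu (x - 1) = nu x.
Proof.
move=> nu_eq0; rewrite /cumul !(big_mkcond (fun y : 'I_L => _ <= _)) -sumrB.
rewrite (eq_bigr (fun y : 'I_L => if y%:Z == x then nu x else 0)); last first.
  move=> y _; case: ifP => y_le; case: ifP => y_le1; case: eqP => y_eq;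
    rewrite ?subrr ?subr0 ?y_eq //; lia.
case: (boolP ((0 <= x) && (x < L%:Z))) => x_in; last first.
  by rewrite (nu_eq0 x x_in) big1 // => y _; case: ifP.
have x_lt : (`|x|%N < L)%N by lia.
rewrite (bigD1 (Ordinal x_lt)) //= ifT; last by apply/eqP; lia.
rewrite big1 ?addr0 // => y y_neq; case: ifP => // /eqP y_eq.
by move/eqP: y_neq; case; apply/val_inj => /=; lia.
Qed.

Lemma cumul_neg L nu x : x < 0 -> cumul L nu x = 0.
Proof. by move=> x_lt0; rewrite /cumul big_pred0 // => y; lia. Qed.

Lemma cumul_total L nu x :
  (forall y : 'I_L, x < y%:Z -> nu y%:Z = 0) -> cumul L nu x = \sum_(y < L) nu y%:Z.
Proof.
move=> nu_eq0; rewrite /cumul big_mkcond; apply: eq_bigr => y _; case: ifP => // y_gt.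
by rewrite nu_eq0 //; lia.
Qed.

Lemma cumul_ge0_le1 L nu x :
  (forall x, 0 <= nu x) -> \sum_(y < L) nu y%:Z = 1 -> 0 <= cumul L nu x <= 1.
Proof.
move=> nu_ge0 nu_sum1; rewrite sumr_ge0 //= -nu_sum1.
by rewrite [leRHS](bigID (fun y : 'I_L => y%:Z <= x)) /= lerDl sumr_ge0.
Qed.

End OneDimension.

Lemma sumr_ord_telescope (V : zmodType) n (f : nat -> V) :
  \sum_(k < n) (f k - f k.+1) = f 0%N - f n.
Proof.
rewrite -opprB -(telescope_sumr _ (leq0n n)) big_mkord -sumrN.
by apply: eq_bigr => k _; rewrite opprB.
Qed.

Section ProductFlow.
Variables (R : realType) (d : nat).

Definition prodm (nu : int -> R) (z : pt d) : R := \prod_(j < d) nu (z j).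

Definition prod_flow (nu nu' F : int -> R) : flow R d := fun z i =>
  \prod_(j < d) (if (j < i)%N then nu' (z j) else if j == i then F (z j) else nu (z j)).

Lemma connects_telescope n (mu : nat -> pt d -> R) (phi : nat -> flow R d) :
  (forall k, (k < n)%N -> connects (mu k) (mu k.+1) (phi k)) ->
  connects (mu 0%N) (mu n) (fun z i => \sum_(k < n) phi k z i).
Proof.
move=> phi_conn z; rewrite -(sumr_ord_telescope n (mu ^~ z)).
under [RHS]eq_bigr do rewrite -sumrB.
rewrite exchange_big /=; apply: eq_bigr => k _; exact: phi_conn.
Qed.

(* The sum over [i] telescopes in the number of coordinates already switched
   from [nu] to [nu']. *)
Lemma connects_prod_flow (nu nu' F : int -> R) :
  (forall x, F x - F (x - 1) = nu x - nu' x) ->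
  connects (prodm nu) (prodm nu') (prod_flow nu nu' F).
Proof.
move=> F_flux z.
pose G n := \prod_(j < d) (if (j < n)%N then nu' (z j) else nu (z j)).
have -> : prodm nu z = G 0%N by apply: eq_bigr.
have -> : prodm nu' z = G d by apply: eq_bigr => j _; rewrite ltn_ord.
rewrite -(sumr_ord_telescope d G); apply: eq_bigr => i _.
rewrite /prod_flow /G (bigD1 i) // [X in _ - X = _](bigD1 i) //.
rewrite [X in _ = X - _](bigD1 i) // [X in _ = _ - X](bigD1 i) //= ltnn ltnSn eqxx.
have -> : subb z i i = z i - 1 by rewrite /subb ffunE eqxx.
have others n : \prod_(j < d | j != i)
      (if (j < n)%N then nu' (subb z i j) else if j == i then F (subb z i j) else nu (subb z i j))
    = \prod_(j < d | j != i) (if (j < n)%N then nu' (z j) else nu (z j)).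
  by apply: eq_bigr => j /negbTE j_neq; rewrite /subb ffunE j_neq subr0.
have others' : \prod_(j < d | j != i)
      (if (j < i)%N then nu' (z j) else if j == i then F (z j) else nu (z j))
    = \prod_(j < d | j != i) (if (j < i)%N then nu' (z j) else nu (z j)).
  by apply: eq_bigr => j /negbTE ->.
have othersS : \prod_(j < d | j != i) (if (j < i.+1)%N then nu' (z j) else nu (z j))
    = \prod_(j < d | j != i) (if (j < i)%N then nu' (z j) else nu (z j)).
  by apply: eq_bigr => j j_neq; rewrite ltnS leq_eqVlt -[_ == _ :> nat]/(j == i) (negbTE j_neq).
by rewrite others others' othersS -!mulrBl F_flux.
Qed.

Lemma support_in_sum L n (phi : nat -> flow R d) :
  (forall k, support_in L (phi k)) -> support_in L (fun z i => \sum_(k < n) phi k z i).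
Proof.
move=> phi_supp z i; apply: contraR => z_out; apply/eqP.
by apply: big1 => k _; apply/eqP; exact: contraNT (phi_supp k z i) z_out.
Qed.

Lemma prod_flow_support L (nu nu' F : int -> R) :
  (forall x : int, ~~ ((0 <= x) && (x < L%:Z)) -> nu x = 0) ->
  (forall x : int, ~~ ((0 <= x) && (x < L%:Z)) -> nu' x = 0) ->
  (forall x : int, ~~ ((0 <= x) && (x + 1 < L%:Z)) -> F x = 0) ->
  support_in L (prod_flow nu nu' F).
Proof.
move=> nu_eq0 nu'_eq0 F_eq0 z i flow_neq0.
have factor_neq0 (j : 'I_d) :
    (if (j < i)%N then nu' (z j) else if j == i then F (z j) else nu (z j)) != 0.
  apply: contraNneq flow_neq0 => factor_eq0.
  by rewrite /prod_flow (bigD1 j) //= factor_eq0 mul0r.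
have zi_in : (0 <= z i) && (z i + 1 < L%:Z).
  by apply: contraR (factor_neq0 i) => /F_eq0; rewrite ltnn eqxx => ->.
have zj_in (j : 'I_d) : j != i -> (0 <= z j) && (z j < L%:Z).
  move=> j_neq; apply: contraR (factor_neq0 j) => zj_out.
  by rewrite (negbTE j_neq); case: ifP => _; rewrite ?nu_eq0 ?nu'_eq0.
apply/andP; split; apply/forallP => j; rewrite ?/addb ?ffunE;
  case: (eqVneq j i) => [->|j_neq] /=; try by move: zi_in; lia.
all: by rewrite ?addr0 zj_in.
Qed.

Lemma norm_prod_flow_le (nu nu' F : int -> R) (c : R) z i :
  (forall x, `|nu x| <= c) -> (forall x, `|nu' x| <= c) -> (forall x, `|F x| <= 1) ->
  `|prod_flow nu nu' F z i| <= c ^+ d.-1.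
Proof.
move=> nu_le nu'_le F_le.
rewrite normr_prod; apply: le_trans (_ : \prod_(j < d) (if j == i then 1 else c) <= _).
  apply: ler_prod => j _; rewrite normr_ge0 /=.
  case: (eqVneq j i) => [->|_]; first by rewrite ltnn F_le.
  by case: ifP => _; [apply: nu'_le | apply: nu_le].
rewrite (bigD1 i) //= eqxx mul1r (eq_bigr (fun _ => c)) => [|j /negbTE -> //].
by rewrite prodr_const cardC1 card_ord.
Qed.

Lemma sum_norm_prod_flow (L : nat) (nu nu' F : int -> R) (i : 'I_d) :
  (forall x, 0 <= nu x) -> (forall x, 0 <= nu' x) ->
  \sum_(x < L) nu x%:Z = 1 -> \sum_(x < L) nu' x%:Z = 1 ->
  \sum_(y : {ffun 'I_d -> 'I_L}) `|prod_flow nu nu' F (box_pt y) i| = \sum_(x < L) `|F x%:Z|.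
Proof.
move=> nu_ge0 nu'_ge0 nu_sum1 nu'_sum1.
pose G (j : 'I_d) (x : 'I_L) :=
  `|if (j < i)%N then nu' x%:Z else if j == i then F x%:Z else nu x%:Z|.
rewrite (eq_bigr (fun y : {ffun 'I_d -> 'I_L} => \prod_(j < d) G j (y j))); last first.
  by move=> y _; rewrite normr_prod; apply: eq_bigr => j _; rewrite /box_pt ffunE.
rewrite -bigA_distr_bigA /= (bigD1 i) //= [X in _ * X]big1 ?mulr1; last first.
  move=> j j_neq; rewrite /G (negbTE j_neq); case: (j < i)%N.
    by rewrite -nu'_sum1; apply: eq_bigr => x _; rewrite ger0_norm.
  by rewrite -nu_sum1; apply: eq_bigr => x _; rewrite ger0_norm.
by rewrite /G ltnn eqxx.
Qed.

Lemma q_l_prodm l z : (0 < l)%N -> q_l R l z = prodm (tent R l) z.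
Proof.
move=> l_gt0; rewrite /q_l /prodm /tent bigA_distr_bigA /=; apply: eq_bigr => y _.
have -> : p_l R l (box_pt y) = (l%:R ^+ d)^-1.
  rewrite /p_l ifT //; apply/forallP => j.
  by rewrite /box_pt ffunE; have := ltn_ord (y j); lia.
rewrite /p_l; case: ifP => [/forallP z_in|/negP z_out].
  rewrite (eq_bigr (fun _ => (l%:R ^+ 2 : R)^-1)) => [|j _]; last first.
    by have := z_in j; rewrite /subp /box_pt !ffunE => ->.
  by rewrite prodr_const card_ord -invfM -exprD exprVn -exprM; congr (_ ^+ _)^-1; lia.
have [j j_out] : exists j, ~~ ((0 <= subp z (box_pt y) j) && (subp z (box_pt y) j < l%:Z)).
  by apply/existsP; rewrite -negb_forall; exact/negP.
rewrite mulr0 (bigD1 j) //= ifF ?mul0r //; apply/negbTE.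
by move: j_out; rewrite /subp /box_pt !ffunE.
Qed.

Lemma delta0_prodm z : delta0 R z = prodm (tent R 1) z.
Proof.
rewrite /delta0 /prodm (eq_bigr (fun j => ((z j == 0)%:R : R))) => [|j _]; last by rewrite tent1.
case: eqP => [->|z_neq0]; first by rewrite big1 // => j _; rewrite ffunE.
case: (pickP (fun j => z j != 0)) => [j zj_neq0|z_eq0].
  by rewrite (bigD1 j) //= (negbTE zj_neq0) mul0r.
by case: z_neq0; apply/ffunP => j; rewrite ffunE; apply/eqP/negbFE/z_eq0.
Qed.

End ProductFlow.

Lemma sum_sqr_sum_le (R : realDomainType) (T : finType) n (f : 'I_n -> T -> R)
    (M : 'I_n -> R) :
  (forall k t, `|f k t| <= M k) ->
  \sum_(t : T) (\sum_(k < n) f k t) ^+ 2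
    <= 2 * \sum_(k' < n) (M k' * \sum_(k < n | (k <= k')%N) \sum_(t : T) `|f k t|).
Proof.
move=> f_le.
pose A (k k' : 'I_n) (t : T) := if (k <= k')%N then `|f k t| * M k' else 0.
apply: le_trans (_ : \sum_t \sum_k \sum_k' (A k k' t + A k' k t) <= _).
  apply: ler_sum => t _; rewrite expr2 mulr_suml; apply: ler_sum => k _.
  rewrite mulr_sumr; apply: ler_sum => k' _.
  apply: le_trans (ler_norm _) _; rewrite normrM /A.
  have A_ge0 (a b : 'I_n) : 0 <= `|f a t| * M b by rewrite mulr_ge0 // (le_trans _ (f_le b t)).
  case: (leqP k k') => k_le.
    case: ifP => _; last by rewrite addr0 ler_wpM2l.
    by rewrite -[leLHS]addr0 lerD // ler_wpM2l.
  by rewrite ifT ?add0r 1?mulrC ?ler_wpM2l //; lia.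
have -> : \sum_t \sum_k \sum_k' (A k k' t + A k' k t) = 2 * \sum_t \sum_k \sum_k' A k k' t.
  rewrite mulr_sumr; apply: eq_bigr => t _.
  under eq_bigr do rewrite big_split.
  by rewrite big_split /= [X in _ + X]exchange_big /= -mulr2n mulr_natl.
rewrite ler_pM2l // le_eqVlt; apply/orP; left; apply/eqP.
rewrite exchange_big /=; under eq_bigr do rewrite exchange_big /=.
rewrite exchange_big /=; apply: eq_bigr => k' _.
rewrite mulr_sumr [RHS]big_mkcond /=; apply: eq_bigr => k _.
rewrite /A; case: ifP => _; last by rewrite big1.
by rewrite mulr_sumr; apply: eq_bigr => t _; rewrite mulrC.
Qed.

Lemma sum_pow2 (R : comRingType) n : \sum_(k < n) (2 : R) ^+ k = 2 ^+ n - 1.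
Proof. by rewrite subrX1 (_ : 2 - 1 = 1) ?mul1r //; ring. Qed.

Lemma sum_pow2V_le2 (R : realFieldType) n : \sum_(k < n) ((2 : R) ^+ k)^-1 <= 2.
Proof.
suff -> : \sum_(k < n) ((2 : R) ^+ k)^-1 = 2 - 2 * (2 ^+ n)^-1.
  by rewrite lerBlDr lerDl mulr_ge0 // invr_ge0 exprn_ge0.
elim: n => [|n IHn]; first by rewrite big_ord0 expr0 invr1 mulr1 subrr.
rewrite big_ord_recr /= IHn exprS.
have pow2_neq0 : (2 : R) ^+ n != 0 by rewrite expf_neq0.
by field.
Qed.

Definition scale (l k : nat) : nat :=
  if (k <= trunc_log 2 l)%N then (2 ^ k)%N else l.

Lemma scale0 l : scale l 0 = 1%N.
Proof. by []. Qed.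

Lemma scale_log l : scale l (trunc_log 2 l).+1 = l.
Proof. by rewrite /scale ltnn. Qed.

Lemma scale_pow l k : (k <= trunc_log 2 l)%N -> scale l k = (2 ^ k)%N.
Proof. by rewrite /scale => ->. Qed.

Lemma scale_gt0 l k : (0 < l)%N -> (0 < scale l k)%N.
Proof. by rewrite /scale; case: ifP; rewrite ?expn_gt0. Qed.

Lemma scale_le l k : (0 < l)%N -> (scale l k <= l)%N.
Proof.
move=> l_gt0; rewrite /scale; case: ifP => // k_le.
by apply: leq_trans (trunc_logP (ltnSn 1) l_gt0); rewrite leq_pexp2l.
Qed.

Lemma scale_homo l k j : (0 < l)%N -> (k <= j)%N -> (scale l k <= scale l j)%N.
Proof.
move=> l_gt0 k_le_j; case: (leqP j (trunc_log 2 l)) => j_le.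
  by rewrite !scale_pow ?leq_pexp2l //; lia.
by rewrite [scale l j]/scale ifF ?scale_le //; lia.
Qed.

Lemma scaleS_le l k : (k <= trunc_log 2 l)%N -> (scale l k.+1 <= 2 ^ k.+1)%N.
Proof.
rewrite /scale; case: ifP => // k_gt k_le.
have -> : k = trunc_log 2 l by lia.
exact/ltnW/trunc_log_ltn.
Qed.

Section DyadicFlow.
Variables (R : realType) (d l : nat).
Hypothesis l_gt0 : (0 < l)%N.
Local Notation K := (trunc_log 2 l).
Local Notation L := (2 * l - 1)%N.

Definition level_law k : int -> R := tent R (scale l k).

Definition level_gap k (x : int) : R :=
  cumul L (level_law k) x - cumul L (level_law k.+1) x.

Definition level_flow k : flow R d :=
  prod_flow (level_law k) (level_law k.+1) (level_gap k).

Definition dyadic_flow : flow R d := fun z i => \sum_(k < K.+1) level_flow k z i.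

Lemma level_law_eq0 k x : ~~ ((0 <= x) && (x < L%:Z)) -> level_law k x = 0.
Proof.
move=> x_out; apply: tent_eq0; apply: contra x_out => /andP[x_ge x_lt].
have scale_le_l := scale_le k l_gt0.
by apply/andP; split; lia.
Qed.

Lemma level_law_sum k : \sum_(x < L) level_law k x%:Z = 1.
Proof. by apply: tent_sum; [exact: scale_gt0 | have := scale_le k l_gt0; lia]. Qed.

Lemma norm_level_law_le k j x : (k <= j)%N -> `|level_law j x| <= (scale l k)%:R^-1.
Proof.
move=> k_le_j; rewrite ger0_norm ?tent_ge0 //.
apply: le_trans (tent_le_inv _ _ (scale_gt0 j l_gt0)) _.
by rewrite lef_pV2 ?posrE ?ltr0n ?scale_gt0 // ler_nat scale_homo.
Qed.

Lemma level_gap_flux k x :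
  level_gap k x - level_gap k (x - 1) = level_law k x - level_law k.+1 x.
Proof.
rewrite -(cumul_increment x (@level_law_eq0 k)) -(cumul_increment x (@level_law_eq0 k.+1)).
by rewrite /level_gap; ring.
Qed.

Lemma norm_level_gap_le1 k x : `|level_gap k x| <= 1.
Proof.
have /andP[cumul_ge0 cumul_le1] := cumul_ge0_le1 x (@tent_ge0 R _) (level_law_sum k).
have /andP[cumulS_ge0 cumulS_le1] := cumul_ge0_le1 x (@tent_ge0 R _) (level_law_sum k.+1).
by rewrite ler_norml /level_gap; apply/andP; split; lra.
Qed.

Lemma level_gap_eq0 k x :
  ~~ ((0 <= x) && (x < (2 * scale l k.+1 - 2)%N%:Z)) -> level_gap k x = 0.
Proof.
move=> x_out; rewrite /level_gap; case: (ltrP x 0) => [x_lt0|x_ge0].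
  by rewrite !cumul_neg ?subrr.
have scale_leS := scale_homo l_gt0 (leqnSn k).
by rewrite !cumul_total ?level_law_sum ?subrr // => y y_gt; apply: tent_eq0; lia.
Qed.

Lemma level_flow_support k : support_in L (level_flow k).
Proof.
apply: prod_flow_support; [exact: level_law_eq0 | exact: level_law_eq0 | move=> x x_out].
apply: level_gap_eq0; apply: contra x_out => /andP[x_ge x_lt].
have scale_le_l := scale_le k.+1 l_gt0.
by apply/andP; split; lia.
Qed.

Lemma dyadic_flow_support : support_in L dyadic_flow.
Proof. exact: support_in_sum level_flow_support. Qed.

Lemma connects_dyadic_flow : connects (@delta0 R d) (q_l R l) dyadic_flow.
Proof.
have := connects_telescope (n := K.+1) (mu := fun k => @prodm R d (level_law k))
  (fun k _ => connects_prod_flow (level_gap_flux k)).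
rewrite /level_law /= scale0 scale_log => conn z.
by rewrite delta0_prodm q_l_prodm //; exact: conn.
Qed.

Lemma norm_level_flow_le k z i : `|level_flow k z i| <= ((scale l k)%:R^-1) ^+ d.-1.
Proof.
apply: norm_prod_flow_le => x.
- exact: norm_level_law_le (leqnn k).
- exact: norm_level_law_le (leqnSn k).
- exact: norm_level_gap_le1.
Qed.

Lemma sum_norm_level_flow_le k : (k <= K)%N ->
  \sum_(y : {ffun 'I_d -> 'I_L}) \sum_(i < d) `|level_flow k (box_pt y) i|
    <= 4 * d%:R * 2 ^+ k.
Proof.
move=> k_le; rewrite exchange_big /=.
have sum_i i : \sum_(y : {ffun 'I_d -> 'I_L}) `|level_flow k (box_pt y) i| <= 4 * 2 ^+ k.
  rewrite sum_norm_prod_flow ?level_law_sum //; try exact: tent_ge0.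
  have scale_le_l := scale_le k.+1 l_gt0; have scaleS_le_pow := scaleS_le k_le.
  apply: le_trans (sum_norm_le_support (s := (2 * scale l k.+1 - 2)%N) _
    (@norm_level_gap_le1 k) _) _.
  - by lia.
  - by move=> x x_ge; apply: level_gap_eq0; lia.
  - by rewrite -natrX -natrM ler_nat; rewrite expnS in scaleS_le_pow; lia.
apply: le_trans (ler_sum _ (fun i _ => sum_i i)) _.
by rewrite sumr_const card_ord -[X in X <= _]mulr_natl mulrCA mulrA.
Qed.

Lemma sum_sqr_dyadic_flow_le :
  \sum_(y : {ffun 'I_d -> 'I_L}) \sum_(i < d) dyadic_flow (box_pt y) i ^+ 2
    <= 16 * d%:R * \sum_(k < K.+1) (2 ^+ k / (2 ^+ k) ^+ d.-1).
Proof.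
pose f k (p : {ffun 'I_d -> 'I_L} * 'I_d) := level_flow k (box_pt p.1) p.2.
rewrite pair_bigA /=.
apply: le_trans (sum_sqr_sum_le (f := fun k : 'I_K.+1 => f k)
  (M := fun k : 'I_K.+1 => ((scale l k)%:R^-1) ^+ d.-1) _) _.
  by move=> k p; exact: norm_level_flow_le.
rewrite !mulr_sumr; apply: ler_sum => k' _.
have k'_le : (k' <= K)%N by rewrite -ltnS.
have partial : \sum_(k < K.+1 | (k <= k')%N) \sum_p `|f k p| <= 8 * d%:R * 2 ^+ k'.
  apply: le_trans (_ : \sum_(k < K.+1 | (k <= k')%N) 4 * d%:R * 2 ^+ k <= _).
    apply: ler_sum => k k_le; rewrite -(pair_bigA _ (fun y i => `|f k (y, i)|)) /=.
    by apply: sum_norm_level_flow_le; lia.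
  rewrite -mulr_sumr.
  have -> : \sum_(k < K.+1 | (k <= k')%N) (2 : R) ^+ k = \sum_(k < k'.+1) 2 ^+ k.
    by rewrite (big_ord_widen K.+1 (fun k => (2 : R) ^+ k)).
  rewrite sum_pow2 exprS.
  have : (0 : R) <= d%:R by [].
  nra.
rewrite scale_pow // natrX exprVn; set M := ((2 : R) ^+ k' ^+ d.-1)^-1.
have M_ge0 : 0 <= M by rewrite invr_ge0 !exprn_ge0.
apply: le_trans (_ : 2 * (M * (8 * d%:R * 2 ^+ k')) <= _).
  by rewrite ler_pM2l // ler_wpM2l.
by rewrite le_eqVlt; apply/orP; left; apply/eqP; ring.
Qed.

Lemma sum_norm_dyadic_flow_le :
  \sum_(y : {ffun 'I_d -> 'I_L}) \sum_(i < d) `|dyadic_flow (box_pt y) i| <= 8 * d%:R * l%:R.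
Proof.
apply: le_trans (_ : \sum_(y : {ffun 'I_d -> 'I_L}) \sum_(i < d)
    \sum_(k < K.+1) `|level_flow k (box_pt y) i| <= _).
  by apply: ler_sum => y _; apply: ler_sum => i _; apply: ler_norm_sum.
under eq_bigr do rewrite exchange_big /=.
rewrite exchange_big /=.
apply: le_trans (_ : \sum_(k < K.+1) 4 * d%:R * (2 : R) ^+ k <= _).
  by apply: ler_sum => k _; apply: sum_norm_level_flow_le; rewrite -ltnS.
rewrite -mulr_sumr sum_pow2 exprS.
have : (2 : R) ^+ K <= l%:R by rewrite -natrX ler_nat trunc_logP.
have : (0 : R) <= d%:R by [].
nra.
Qed.

End DyadicFlow.

Lemma dyadic_flow1 (R : realType) d z i : @dyadic_flow R d 1 z i = 0.
Proof.
rewrite /dyadic_flow trunc_log1 big_ord1 /level_flow /prod_flow (bigD1 i) //= ltnn eqxx.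
by rewrite /level_gap /level_law /scale trunc_log1 /= subrr mul0r.
Qed.

Lemma ln2_gt0 (R : realType) : 0 < ln (2 : R).
Proof. by rewrite ln_gt0 // ltr1n. Qed.

Lemma ln2_le2 (R : realType) : ln (2 : R) <= 2.
Proof. exact/ltW/ln_sublinear. Qed.

Lemma sum_dyadic_le_g_d (R : realType) d l : (0 < d)%N -> (1 < l)%N ->
  \sum_(k < (trunc_log 2 l).+1) ((2 : R) ^+ k / (2 ^+ k) ^+ d.-1)
    <= 4 / ln 2 * g_d R d l.
Proof.
move=> d_gt0 l_gt1; set K := trunc_log 2 l.
have ln2_gt0 := ln2_gt0 R; have ln2_le2 := ln2_le2 R.
have two_le : 2 <= 4 / ln (2 : R) by rewrite ler_pdivlMr //; lra.
have pow_le : (2 : R) ^+ K <= l%:R by rewrite -natrX ler_nat trunc_logP // ltnW.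
rewrite /g_d; case: ifP => [/eqP d1|/negbT d_neq1]; last case: ifP => [/eqP d2|/negbT d_neq2].
- subst d; under eq_bigr do rewrite expr0 divr1.
  rewrite sum_pow2 exprS.
  have : (0 : R) <= l%:R by [].
  nra.
- subst d; under eq_bigr do rewrite expr1 divff ?expf_neq0 //.
  rewrite sumr_const card_ord -natr1 mulrAC ler_pdivlMr //.
  have K_gt0 : (0 < K)%N by rewrite trunc_log_gt0 l_gt1.
  have K_ln2 : K%:R * ln (2 : R) <= ln l%:R.
    by rewrite mulr_natl -lnXn // ler_ln ?posrE ?exprn_gt0 ?ltr0n 1?ltnW.
  have ln2_le : ln (2 : R) <= ln l%:R.
    by rewrite ler_ln ?posrE ?ltr0n ?ler_nat //; exact: ltnW l_gt1.
  have : (1 : R) <= K%:R by rewrite ler1n.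
  nra.
- rewrite mulr1; apply: le_trans two_le; apply: le_trans (@sum_pow2V_le2 R K.+1).
  apply: ler_sum => k _.
  have pow_ge1 : (1 : R) <= 2 ^+ k by rewrite exprn_ege1 // ler1n.
  have -> : d.-1 = (d - 2).+1 by lia.
  rewrite exprS invfM mulrA divff ?expf_neq0 // mul1r lef_pV2 ?posrE ?exprn_gt0 //.
  have d_gt2 : (0 < d - 2)%N by lia.
  exact: ler_eXnr d_gt2 pow_ge1.
Qed.

Lemma sum_sqr_dyadic_flow_le_g_d (R : realType) d l : (0 < d)%N -> (0 < l)%N ->
  \sum_(y : {ffun 'I_d -> 'I_(2 * l - 1)}) \sum_(i < d) @dyadic_flow R d l (box_pt y) i ^+ 2
    <= 64 * d%:R / ln 2 * g_d R d l.
Proof.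
move=> d_gt0 l_gt0; have ln2_gt0 := ln2_gt0 R.
case: (ltngtP l 1) => [l_lt1|l_gt1|l1]; first by lia.
- apply: le_trans (sum_sqr_dyadic_flow_le _ _ l_gt0) _.
  have -> : 64 * d%:R / ln 2 * g_d R d l = 16 * d%:R * (4 / ln 2 * g_d R d l) by ring.
  by rewrite ler_wpM2l ?sum_dyadic_le_g_d // mulr_ge0.
(* The bound of [sum_dyadic_le_g_d] fails at [l = 1] (where [g_d R 2 1 = ln 1 = 0]),
   but there the flow vanishes. *)
- subst l; under eq_bigr do under eq_bigr do rewrite dyadic_flow1 expr2 mulr0.
  have g_d1_ge0 : 0 <= g_d R d 1.
    by rewrite /g_d mulr1n ln1; case: ifP => _; last case: ifP => _.
  rewrite !big1_eq; apply: mulr_ge0 => //.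
  by apply: divr_ge0; [exact: mulr_ge0 | exact: ltW].
Qed.

Unset Implicit Arguments.

(* Sums over Z^d x B are taken over Lambda_(2l-1) x B, which contains the support. *)
Theorem lemma3p2 (R : realType) (d : nat) (hd : (0 < d)%N) :
  exists C : R, forall l : nat, (0 < l)%N ->
    exists phi : flow R d,
      [/\ connects (@delta0 R d) (q_l R l) phi,
          support_in (2 * l - 1) phi,
          \sum_(y : {ffun 'I_d -> 'I_(2 * l - 1)}) \sum_(i < d) (phi (box_pt y) i) ^+ 2
            <= C * g_d R d l
        & \sum_(y : {ffun 'I_d -> 'I_(2 * l - 1)}) \sum_(i < d) `|phi (box_pt y) i|
            <= C * l%:R].
Proof.
have ln2_gt0 := ln2_gt0 R; have ln2_le2 := ln2_le2 R.
exists (64 * d%:R / ln 2) => l l_gt0; exists (@dyadic_flow R d l); split.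
- exact: connects_dyadic_flow.
- exact: dyadic_flow_support.
- exact: sum_sqr_dyadic_flow_le_g_d.
- apply: le_trans (sum_norm_dyadic_flow_le _ _ l_gt0) _.
  apply: ler_wpM2r => //; rewrite ler_pdivlMr //.
  have : (0 : R) <= d%:R by [].
  nra.
Qed.
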